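(* Let $G$ be a finite group, $p$ a prime, and $n>0$ an integer with $\gcd(n,p)=1$. Then $P_e(G)\cong P_e(\mathbb{Z}_p\times\mathbb{Z}_p\times\mathbb{Z}_n)$ if and only if $G\cong \mathbb{Z}_p\times\mathbb{Z}_p\times\mathbb{Z}_n$.
   Context: All groups are finite. $\mathbb{Z}_k$ denotes the cyclic group of order $k$. For a group $X$, the enhanced power graph $P_e(X)$ is the simple graph with vertex set $X$ in which two distinct vertices $x,y$ are adjacent if and only if $\langle x,y\rangle$ is cyclic. *)

From mathcomp Require Import all_boot all_fingroup all_solvable all_algebra.
Set Implicit Arguments. Unset Strict Implicit. Unset Printing Implicit Defensive.
Local Open Scope group_scope.

Definition epg_adj (gT : finGroupType) (x y : gT) : bool :=
  (x != y) && cyclic <<[set x; y]>>.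

Definition epg_iso (gT hT : finGroupType) (G : {set gT}) (H : {set hT}) : Prop :=
  exists f : gT -> hT,
    [/\ {in G &, injective f}, f @: G = H &
        {in G &, forall x y, epg_adj (f x) (f y) = epg_adj x y}].

(* Zp k is the full additive group of integers mod k for k > 1 and trivial
   for k = 1, so this is correct for every n > 0 and prime p. *)
Definition ZpZpZn (p n : nat) : {set 'Z_p * ('Z_p * 'Z_n)} :=
  setX (Zp p) (setX (Zp p) (Zp n)).

(* If P_e(G) looks like P_e(Z_p x Z_p x Z_n), the graph already tells us that
   |G| = p^2 n, that exactly n vertices are dominating, and that every other
   vertex has a closed neighbourhood which is a clique of size pn.  In a group,
   a neighbourhood that is a clique is a cyclic subgroup; so every element has
   order dividing pn, a Sylow p-subgroup (of order p^2) has exponent p and is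
   Z_p x Z_p, and the dominating elements are central of order prime to p and
   form a cyclic subgroup of order n.  Hence G = Z_p x Z_p x Z_n.  In
   Z_p x Z_p x Z_n itself, the vertices (0, 0, z) dominate, and the
   neighbourhood of (a, b, z) with (a, b) <> 0 is the cyclic group of order pn
   generated by (a, b, c) for a generator c of Z_n, by the Chinese remainder
   theorem. *)

From mathcomp Require Import all_boot all_fingroup all_solvable all_algebra.

Set Implicit Arguments. Unset Strict Implicit. Unset Printing Implicit Defensive.
Import GRing.Theory.
Local Open Scope group_scope.

Section EnhancedPowerGraph.
Variable gT : finGroupType.
Implicit Types (A : {set gT}) (x y : gT).

(* Neighbourhoods are closed: unlike epg_adj, the relation used here is
   reflexive. *)
Definition epg_nbhd A x := [set y in A | cyclic <<[set x; y]>>].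
Definition epg_dom A := [set x in A | A \subset epg_nbhd A x].
Definition epg_clique A := {in A &, forall x y, cyclic <<[set x; y]>>}.

Lemma cyclic_gen2C x y : cyclic <<[set x; y]>> = cyclic <<[set y; x]>>.
Proof. by rewrite setUC. Qed.

Lemma cyclic_gen2_id x : cyclic <<[set x; x]>>.
Proof. by rewrite setUid cycle_cyclic. Qed.

Lemma mem_gen2l x y : x \in <<[set x; y]>>.
Proof. by rewrite mem_gen // !inE eqxx. Qed.

Lemma mem_gen2r x y : y \in <<[set x; y]>>.
Proof. by rewrite mem_gen // !inE eqxx orbT. Qed.

Lemma gen2_subG (H : {group gT}) x y :
  (<<[set x; y]>> \subset H) = (x \in H) && (y \in H).
Proof. by rewrite gen_subG subUset !sub1set. Qed.

Lemma epg_nbhdP A x y :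
  reflect (y \in A /\ cyclic <<[set x; y]>>) (y \in epg_nbhd A x).
Proof. by rewrite inE; apply: andP. Qed.

Lemma epg_domP A x :
  reflect (x \in A /\ {in A, forall y, cyclic <<[set x; y]>>}) (x \in epg_dom A).
Proof.
rewrite inE; apply: (iffP andP) => -[xA dom_x]; split=> //.
  by move=> y /(subsetP dom_x) /epg_nbhdP[].
by apply/subsetP=> y yA; rewrite inE yA dom_x.
Qed.

Lemma epg_dom_nbhd A x y : x \in epg_dom A -> y \in A -> x \in epg_nbhd A y.
Proof. by case/epg_domP=> xA dom_x yA; rewrite inE xA cyclic_gen2C dom_x. Qed.

Lemma cyclic_cycle_sub (c x y : gT) :
  x \in <[c]> -> y \in <[c]> -> cyclic <<[set x; y]>>.
Proof. by move=> xc yc; apply: cyclicS (cycle_cyclic c); rewrite gen2_subG xc. Qed.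

End EnhancedPowerGraph.

Definition epg_invariants (gT : finGroupType) (G : {set gT}) (p n : nat) : Prop :=
  [/\ #|G| = (p ^ 2 * n)%N, #|epg_dom G| = n &
      {in G, forall x, x \notin epg_dom G ->
         epg_clique (epg_nbhd G x) /\ #|epg_nbhd G x| = (p * n)%N}].

Section EpgIsomorphism.
Variables (gT hT : finGroupType) (G : {set gT}) (H : {set hT}) (f : gT -> hT).
Hypotheses (f_inj : {in G &, injective f}) (f_im : f @: G = H)
  (f_adj : {in G &, forall x y, epg_adj (f x) (f y) = epg_adj x y}).

Lemma epg_iso_cyclic : {in G &, forall x y,
  cyclic <<[set f x; f y]>> = cyclic <<[set x; y]>>}.
Proof.
move=> x y xG yG; have [<-|neq_xy] := eqVneq x y; first by rewrite !cyclic_gen2_id.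
by have := f_adj xG yG; rewrite /epg_adj (inj_in_eq f_inj) // neq_xy.
Qed.

Lemma mem_epg_iso x : x \in G -> f x \in H.
Proof. by move=> xG; rewrite -f_im imset_f. Qed.

Lemma card_epg_iso (A : {set gT}) : A \subset G -> #|f @: A| = #|A|.
Proof. by move=> sAG; apply: card_in_imset; apply: sub_in2 f_inj; apply/subsetP. Qed.

Lemma epg_iso_nbhd x : x \in G -> f @: epg_nbhd G x = epg_nbhd H (f x).
Proof.
move=> xG; apply/setP=> z; apply/imsetP/epg_nbhdP => [[y /epg_nbhdP[yG cxy] ->]|].
  by rewrite epg_iso_cyclic ?mem_epg_iso.
rewrite -f_im => -[/imsetP[y yG ->]]; rewrite epg_iso_cyclic // => cxy.
by exists y; rewrite ?inE ?yG.
Qed.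

Lemma mem_epg_iso_dom x : x \in G -> (f x \in epg_dom H) = (x \in epg_dom G).
Proof.
move=> xG; apply/epg_domP/epg_domP => -[_ dom_x]; split; rewrite ?mem_epg_iso //.
  by move=> y yG; rewrite -epg_iso_cyclic ?dom_x ?mem_epg_iso.
by rewrite -f_im => _ /imsetP[y yG ->]; rewrite epg_iso_cyclic ?dom_x.
Qed.

Lemma epg_iso_dom : f @: epg_dom G = epg_dom H.
Proof.
apply/setP=> z; apply/imsetP/idP => [[x xD ->] | zD].
  by rewrite mem_epg_iso_dom //; case/epg_domP: xD.
have /epg_domP[] := zD; rewrite -f_im => /imsetP[x xG def_z] _.
by exists x; rewrite // -mem_epg_iso_dom // -def_z.
Qed.

Lemma epg_iso_clique (A : {set gT}) :
  A \subset G -> epg_clique (f @: A) -> epg_clique A.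
Proof.
move=> /subsetP sAG clqA x y xA yA.
by rewrite -epg_iso_cyclic ?sAG // clqA ?imset_f.
Qed.

Lemma epg_iso_invariants p n : epg_invariants H p n -> epg_invariants G p n.
Proof.
case=> cardH card_domH nbhdH.
have sub_nbhd x : epg_nbhd G x \subset G by apply/subsetP=> y /epg_nbhdP[].
split.
- by rewrite -card_epg_iso // -cardH f_im.
- by rewrite -card_epg_iso ?epg_iso_dom //; apply/subsetP=> x /epg_domP[].
move=> x xG not_dom_x.
have [] := nbhdH (f x) (mem_epg_iso xG); first by rewrite mem_epg_iso_dom.
rewrite -epg_iso_nbhd // => clq_fN card_fN.
split; first exact: epg_iso_clique clq_fN.
by rewrite -card_fN card_epg_iso.
Qed.

End EpgIsomorphism.

Lemma isog_epg_iso (gT hT : finGroupType) (G : {group gT}) (H : {group hT}) :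
  G \isog H -> epg_iso G H.
Proof.
move=> /isogP[f inj_f <-]; exists f; split; first exact/injmP.
  by rewrite morphimEdom.
move=> x y xG yG; rewrite /epg_adj (inj_in_eq (injmP inj_f)) //.
have sxyG : [set x; y] \subset G by rewrite subUset !sub1set xG yG.
rewrite -(morphim_set1 f xG) -(morphim_set1 f yG) -morphimU -morphim_gen //.
by rewrite injm_cyclic // gen_subG.
Qed.

Section EpgGroup.
Variables (gT : finGroupType) (G : {group gT}).

(* Take a neighbour y maximising <<x, y>> = <[c]>.  A neighbour z lies with c
   in some cyclic <[w]>, which contains x, hence equals <[c]> by maximality. *)
Lemma epg_clique_nbhd_cycle x :
  x \in G -> epg_clique (epg_nbhd G x) -> exists c, epg_nbhd G x = <[c]>.
Proof.
move=> xG clq_x; have xN : x \in epg_nbhd G x by rewrite inE xG cyclic_gen2_id.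
have [y yN max_y] := arg_maxnP (fun y => #|<<[set x; y]>>|) xN.
have /epg_nbhdP[yG /cyclicP[c def_xy]] := yN.
have xc : x \in <[c]> by rewrite -def_xy mem_gen2l.
have sub_cN : <[c]> \subset epg_nbhd G x.
  have sub_cG : <[c]> \subset G by rewrite -def_xy gen2_subG xG.
  by apply/subsetP=> z zc; rewrite inE (subsetP sub_cG) ?(cyclic_cycle_sub xc).
exists c; apply/eqP; rewrite eqEsubset sub_cN andbT; apply/subsetP=> z zN.
have cN := subsetP sub_cN c (cycle_id c).
have /cyclicP[w def_cz] := clq_x c z cN zN.
have sub_cw : <[c]> \subset <[w]> by rewrite -def_cz cycle_subG mem_gen2l.
have wG : w \in G.
  rewrite -cycle_subG -def_cz gen2_subG.
  by case/epg_nbhdP: cN => ->; case/epg_nbhdP: zN.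
have def_xw : <<[set x; w]>> = <[w]>.
  apply/eqP; rewrite eqEsubset gen2_subG (subsetP sub_cw) ?cycle_id //.
  by rewrite cycle_subG mem_gen2r.
have wN : w \in epg_nbhd G x by rewrite inE wG def_xw cycle_cyclic.
have def_cw : <[c]> = <[w]>.
  by apply/eqP; rewrite eqEcard sub_cw -def_xy -def_xw; apply: max_y.
by rewrite def_cw -def_cz mem_gen2r.
Qed.

Lemma epg_dom_cent : epg_dom G \subset 'C(G).
Proof.
apply/centsP=> x /epg_domP[_ dom_x] y yG.
exact: (centsP (cyclic_abelian (dom_x y yG))) _ (mem_gen2l x y) _ (mem_gen2r x y).
Qed.

Lemma epg_domX x m : x \in epg_dom G -> x ^+ m \in epg_dom G.
Proof.
case/epg_domP=> xG dom_x; apply/epg_domP; split=> [|y yG]; first exact: groupX.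
by apply: cyclicS (dom_x y yG); rewrite gen2_subG groupX ?mem_gen2l ?mem_gen2r.
Qed.

Lemma epg_dom_cycle_eq u v :
  u \in epg_dom G -> v \in G -> #[u] = #[v] -> <[u]> = <[v]>.
Proof.
case/epg_domP=> _ dom_u vG eq_uv; apply/eqP.
rewrite (eq_subG_cyclic (dom_u v vG)) ?cycle_subG ?mem_gen2l ?mem_gen2r //.
by rewrite -!orderE eq_uv.
Qed.

End EpgGroup.

Lemma Zp_cyclic k : cyclic (Zp k).
Proof.
by rewrite /Zp; case: ifP => _; [rewrite Zp_cycle cycle_cyclic | exact: cyclic1].
Qed.

Lemma cyclic_isog_Zp (gT : finGroupType) (A : {group gT}) :
  cyclic A -> A \isog Zp #|A|.
Proof. by move=> cycA; rewrite isog_cyclic_card // Zp_cyclic card_Zp ?eqxx. Qed.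

Lemma dprod_isog_setX (gT hT kT : finGroupType) (A B G : {group gT})
    (H : {group hT}) (K : {group kT}) :
  A \x B = G -> A \isog H -> B \isog K -> G \isog setX H K.
Proof.
move=> defG isoAH isoBK; apply: isog_dprod defG (setX_dprod H K) _ _.
  by apply: isog_trans isoAH _; apply: isog_setX1.
by apply: isog_trans isoBK _; apply: isog_set1X.
Qed.

Lemma p2group_exponent_p_dprod (gT : finGroupType) (S : {group gT}) p :
  prime p -> #|S| = (p ^ 2)%N -> {in S, forall s, #[s] %| p} ->
  exists u v, [/\ <[u]> \x <[v]> = S, #[u] = p & #[v] = p].
Proof.
move=> p_pr cardS expS.
have ord_p s : s \in S -> s != 1 -> #[s] = p.
  by move=> sS nts; apply/(prime_nt_dvdP p_pr); rewrite ?order_eq1 ?expS.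
have p_lt_cardS : p < #|S| by rewrite cardS -[ltnLHS]expn1 ltn_exp2l ?prime_gt1.
have /trivgPn[u uS ntu] : S :!=: 1.
  by apply: contraTneq p_lt_cardS => ->; rewrite cards1 -leqNgt prime_gt0.
have /subsetPn[v vS v_u] : ~~ (S \subset <[u]>).
  by apply: contraTN p_lt_cardS => /subset_leq_card; rewrite -orderE ord_p // leqNgt.
have ntv : v != 1 by apply: contraNneq v_u => ->; apply: group1.
exists u, v; rewrite !ord_p //; split=> //.
have TIuv : <[u]> :&: <[v]> = 1.
  by rewrite setIC prime_TIg ?cycle_subG // -orderE ord_p.
have cuv : <[v]> \subset 'C(<[u]>).
  by apply: sub_abelian_cent2 (card_p2group_abelian p_pr cardS) _ _; rewrite cycle_subG.
rewrite dprodE //; apply/eqP; rewrite eqEcard mul_subG ?cycle_subG //=.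
by rewrite TI_cardMg // -!orderE !ord_p // cardS.
Qed.

Section InvariantsIsog.
Variables (gT : finGroupType) (G : {group gT}) (p n : nat).
Hypotheses (p_pr : prime p) (n_gt0 : 0 < n) (n_coprime_p : coprime n p).
Hypotheses (cardG : #|G| = (p ^ 2 * n)%N) (card_dom : #|epg_dom G| = n).
Hypothesis nondom_nbhd : {in G, forall x, x \notin epg_dom G ->
  epg_clique (epg_nbhd G x) /\ #|epg_nbhd G x| = (p * n)%N}.

Lemma exists_nondom : exists2 y, y \in G & y \notin epg_dom G.
Proof.
have /subsetPn[y yG ndy] : ~~ (G \subset epg_dom G).
  apply/negP=> /subset_leq_card; rewrite cardG card_dom leqNgt ltn_Pmull //.
  exact: (ltn_exp2l 0 2 (prime_gt1 p_pr)).
by exists y.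
Qed.

Lemma nondom_nbhd_cycle y : y \in G -> y \notin epg_dom G ->
  exists2 c, epg_nbhd G y = <[c]> & #[c] = (p * n)%N.
Proof.
move=> yG ndy; have [clq_y card_y] := nondom_nbhd yG ndy.
have [c def_y] := epg_clique_nbhd_cycle yG clq_y.
by exists c; rewrite // -card_y def_y.
Qed.

Lemma order_dvd_pn g : g \in G -> #[g] %| p * n.
Proof.
move=> gG; have [gD | ndg] := boolP (g \in epg_dom G).
  have [y yG ndy] := exists_nondom; have [c def_y <-] := nondom_nbhd_cycle yG ndy.
  by apply: order_dvdG; rewrite /= -def_y epg_dom_nbhd.
have [c def_g <-] := nondom_nbhd_cycle gG ndg.
by apply: order_dvdG; rewrite /= -def_g inE gG cyclic_gen2_id.
Qed.

Lemma card_Sylow (S : {group gT}) : p.-Sylow(G) S -> #|S| = (p ^ 2)%N.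
Proof.
move=> sylS; rewrite (card_Hall sylS) cardG p_part mulnC logn_Gauss.
  by rewrite lognX logn_prime // eqxx muln1.
by rewrite coprime_sym.
Qed.

Lemma Sylow_order_dvd (S : {group gT}) : p.-Sylow(G) S -> {in S, forall s, #[s] %| p}.
Proof.
move=> sylS s sS; have sG := subsetP (pHall_sub sylS) s sS.
have : #[s] %| gcdn (p ^ 2) (p * n).
  by rewrite dvdn_gcd order_dvd_pn // -(card_Sylow sylS) order_dvdG.
by rewrite expnS expn1 -muln_gcdr gcdnC (eqP n_coprime_p) muln1.
Qed.

(* A dominating element of order p would generate the same subgroup as every
   element of order p, while a Sylow p-subgroup has p^2 elements of order 1 or p. *)
Lemma dom_order_coprime g : g \in epg_dom G -> coprime #[g] p.
Proof.
move=> gD; rewrite coprime_sym prime_coprime //; apply/negP=> p_dvd_g.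
have [_ /cycleP[m ->] ord_gm] := Cauchy p_pr p_dvd_g.
have [S sylS] := Sylow_exists p G.
have : S \subset <[g ^+ m]>.
  apply/subsetP=> s sS; have [-> | nts] := eqVneq s 1; first exact: group1.
  have sG := subsetP (pHall_sub sylS) s sS.
  have ord_s : #[s] = p.
    by apply/(prime_nt_dvdP p_pr); rewrite ?order_eq1 ?(Sylow_order_dvd sylS).
  by rewrite (epg_dom_cycle_eq (epg_domX m gD) sG) ?cycle_id // ord_s.
move/subset_leq_card; rewrite (card_Sylow sylS) -orderE ord_gm leqNgt.
by rewrite -[ltnLHS]expn1 ltn_exp2l ?prime_gt1.
Qed.

Lemma dom_cycle : exists2 d, epg_dom G = <[d]> & #[d] = n.
Proof.
have [y yG ndy] := exists_nondom; have [c def_y ord_c] := nondom_nbhd_cycle yG ndy.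
have ord_cp : #[c ^+ p] = n by rewrite orderXdiv ord_c ?dvdn_mulr // mulKn ?prime_gt0.
exists (c ^+ p) => //; apply/eqP; rewrite eqEcard -orderE ord_cp card_dom leqnn andbT.
apply/subsetP=> g gD; have gc : g \in <[c]> by rewrite -def_y epg_dom_nbhd.
have : #[g] %| #[c ^+ p].
  rewrite ord_cp -(Gauss_dvdr _ (dom_order_coprime gD)) order_dvd_pn //.
  by case/epg_domP: gD.
by rewrite (cardSg_cyclic (cycle_cyclic c)) ?cycle_subG ?mem_cycle // => /subsetP->.
Qed.

Lemma isog_ZpZpZn : G \isog ZpZpZn p n.
Proof.
have [d def_dom ord_d] := dom_cycle; have [S sylS] := Sylow_exists p G.
have [u [v [defS ord_u ord_v]]] :=
  p2group_exponent_p_dprod p_pr (card_Sylow sylS) (Sylow_order_dvd sylS).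
have sdG : <[d]> \subset G by rewrite -def_dom; apply/subsetP=> x /epg_domP[].
have cSd : <[d]> \subset 'C(S).
  by rewrite -def_dom (subset_trans (epg_dom_cent G)) ?centS ?(pHall_sub sylS).
have coSd : coprime #|S| #|<[d]>|.
  by rewrite (card_Sylow sylS) -orderE ord_d coprimeXl // coprime_sym.
have defG : S \x <[d]> = G.
  rewrite dprodE ?coprime_TIg //; apply/eqP.
  rewrite eqEcard mul_subG ?(pHall_sub sylS) //= TI_cardMg ?coprime_TIg //.
  by rewrite (card_Sylow sylS) -orderE ord_d cardG.
have cvd : <[d]> \subset 'C(<[v]>).
  rewrite (subset_trans cSd) ?centS //.
  by case/dprodP: defS => _ <- _ _; apply: mulG_subr.
have defK : <[v]> \x <[d]> = <[v]> <*> <[d]>.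
  by rewrite dprodEY // coprime_TIg // -!orderE ord_v ord_d coprime_sym.
rewrite -defS -dprodA defK in defG.
apply: dprod_isog_setX defG _ _; first by rewrite -ord_u cyclic_isog_Zp ?cycle_cyclic.
apply: dprod_isog_setX defK _ _; first by rewrite -ord_v cyclic_isog_Zp ?cycle_cyclic.
by rewrite -ord_d cyclic_isog_Zp ?cycle_cyclic.
Qed.

End InvariantsIsog.

Lemma expg_pair (aT bT : finGroupType) (g : aT * bT) m :
  g ^+ m = (g.1 ^+ m, g.2 ^+ m).
Proof. by case: g => x y; elim: m => [|m IHm]; rewrite ?expgS ?IHm. Qed.

Lemma order_pair_dvdn (aT bT : finGroupType) (x : aT) (y : bT) m :
  #[(x, y)] %| m = (#[x] %| m) && (#[y] %| m).
Proof. by rewrite !order_dvdn expg_pair; apply: xpair_eqE. Qed.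

Lemma order_pair (aT bT : finGroupType) (x : aT) (y : bT) :
  #[(x, y)] = lcmn #[x] #[y].
Proof.
apply/eqP; rewrite eqn_dvd order_pair_dvdn dvdn_lcml dvdn_lcmr dvdn_lcm.
by rewrite -order_pair_dvdn dvdnn.
Qed.

Lemma Zp_expgE q (a : 'Z_q) m : a ^+ m = (m%:R * a)%R.
Proof. by rewrite Zp_expg -Zp_mulrn mulr_natl. Qed.

Lemma Zp_expg_congr q (a k : 'Z_q) m :
  1 < q -> m = k %[mod q] -> a ^+ m = (k * a)%R.
Proof.
by move=> q_gt1 eq_mk; rewrite Zp_expgE -Zp_nat_mod // eq_mk Zp_nat_mod // natr_Zp.
Qed.

Lemma Zp_order_dvd q (a : 'Z_q) : 1 < q -> #[a] %| q.
Proof. by move=> q_gt1; rewrite -{2}(card_Zp (ltnW q_gt1)) order_dvdG ?mem_Zp. Qed.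

Lemma Zp_prime_order p (a : 'Z_p) : prime p -> a != 0%R -> #[a] = p.
Proof.
move=> p_pr nz_a; apply/(prime_nt_dvdP p_pr); first by rewrite order_eq1.
exact: Zp_order_dvd (prime_gt1 p_pr).
Qed.

Lemma Zp_prime_unit p (a : 'Z_p) : prime p -> a != 0%R -> a \is a GRing.unit.
Proof.
move=> p_pr nz_a; rewrite -(natr_Zp a) unitZpE ?prime_gt1 // prime_coprime //.
by rewrite gtnNdvd ?lt0n // -[p in _ < p]Zp_cast ?prime_gt1.
Qed.

Section ZpZpZnGraph.
Variables (p n : nat).
Hypotheses (p_pr : prime p) (n_gt0 : 0 < n) (n_coprime_p : coprime n p).
Local Notation T := (ZpZpZn p n).

Let p_gt1 : 1 < p := prime_gt1 p_pr.

Lemma card_ZpZpZn : #|T| = (p ^ 2 * n)%N.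
Proof. by rewrite !cardsX mulnA mulnn !card_Zp // prime_gt0. Qed.

Lemma mem_ZpZpZn (x : 'Z_p * ('Z_p * 'Z_n)) : (x \in T) = (x.2.2 \in Zp n).
Proof. by rewrite !inE !(mem_Zp _ p_gt1). Qed.

Lemma mem_line_cycle (a b k : 'Z_p) (c : 'Z_n) z : Zp n = <[c]> ->
  z \in T -> z.1 = (k * a)%R -> z.2.1 = (k * b)%R -> z \in <[(a, (b, c))]>.
Proof.
move=> def_Zn; rewrite mem_ZpZpZn def_Zn; case: z => z1 [z2 z3] /=.
case/cycleP=> j -> -> ->; have ord_c : #[c] = n by rewrite orderE -def_Zn card_Zp.
have coprime_pc : coprime p #[c] by rewrite ord_c coprime_sym.
apply/cycleP; exists (chinese p #[c] k j); rewrite !expg_pair /=.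
rewrite !(Zp_expg_congr _ p_gt1 (chinese_modl coprime_pc _ _)).
by rewrite -[c ^+ chinese _ _ _ _]expg_mod_order chinese_modr // expg_mod_order.
Qed.

Lemma order_line_gen (a b : 'Z_p) (c : 'Z_n) :
  (a != 0%R) || (b != 0%R) -> #[c] = n -> #[(a, (b, c))] = (p * n)%N.
Proof.
move=> nz_ab ord_c; rewrite !order_pair lcmnA ord_c.
have -> : lcmn #[a] #[b] = p.
  case/orP: nz_ab => [nz_a | nz_b].
    by rewrite (Zp_prime_order p_pr nz_a); apply/lcmn_idPl/Zp_order_dvd.
  by rewrite (Zp_prime_order p_pr nz_b); apply/lcmn_idPr/Zp_order_dvd.
by rewrite /lcmn (eqP (_ : coprime p n)) ?divn1 // coprime_sym.
Qed.

Lemma epg_nbhd_ZpZpZn (c : 'Z_n) x : Zp n = <[c]> -> x \in T ->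
  (x.1 != 0%R) || (x.2.1 != 0%R) -> epg_nbhd T x = <[(x.1, (x.2.1, c))]>.
Proof.
move=> def_Zn xT nz_x; set g := (x.1, (x.2.1, c)).
have sub_gT : <[g]> \subset T by rewrite cycle_subG mem_ZpZpZn def_Zn cycle_id.
have xg : x \in <[g]> by apply: (mem_line_cycle (k := 1%R)); rewrite ?mul1r.
apply/eqP; rewrite eqEsubset; apply/andP; split; apply/subsetP=> y; last first.
  by move=> yg; rewrite inE (subsetP sub_gT) // (cyclic_cycle_sub xg yg).
case/epg_nbhdP=> yT /cyclicP[h def_h].
have /cycleP[i def_x] : x \in <[h]> by rewrite -def_h mem_gen2l.
have /cycleP[j def_y] : y \in <[h]> by rewrite -def_h mem_gen2r.
have unit_i : (i%:R : 'Z_p)%R \is a GRing.unit.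
  apply: Zp_prime_unit => //; apply: contraTneq nz_x => i0.
  by rewrite def_x !expg_pair /= !Zp_expgE i0 !mul0r eqxx.
by apply: (mem_line_cycle (k := (j%:R / i%:R)%R)) => //;
  rewrite def_x def_y !expg_pair /= !Zp_expgE mulrA divrK.
Qed.

Lemma mem_axis_ZpZpZn (x : 'Z_p * ('Z_p * 'Z_n)) :
  (x \in setX 1 (setX 1 (Zp n))) = [&& x.1 == 0%R, x.2.1 == 0%R & x.2.2 \in Zp n].
Proof. by rewrite !inE. Qed.

Lemma epg_dom_ZpZpZn : epg_dom T = setX 1 (setX 1 (Zp n)).
Proof.
have [c def_Zn] := cyclicP (Zp_cyclic n).
apply/setP=> x; rewrite mem_axis_ZpZpZn; apply/idP/idP.
  case/epg_domP=> xT dom_x; rewrite -mem_ZpZpZn xT andbT; apply: contraT.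
  rewrite negb_and => nz_x; have sub_TN : T \subset epg_nbhd T x.
    by apply/subsetP=> y yT; rewrite inE yT dom_x.
  move/subset_leq_card: sub_TN; rewrite (epg_nbhd_ZpZpZn def_Zn) // -orderE.
  rewrite order_line_gen ?orderE -?def_Zn ?card_Zp // card_ZpZpZn.
  by rewrite leq_pmul2r // leqNgt -[ltnLHS]expn1 ltn_exp2l ?p_gt1.
case/and3P=> /eqP x1 /eqP x2; rewrite -mem_ZpZpZn => xT.
apply/epg_domP; split=> // y yT.
have [nz_y | ] := boolP ((y.1 != 0%R) || (y.2.1 != 0%R)).
  apply: (@cyclic_cycle_sub _ (y.1, (y.2.1, c))).
    by apply: (mem_line_cycle (k := 0%R)); rewrite ?x1 ?x2 ?mul0r.
  by apply: (mem_line_cycle (k := 1%R)); rewrite ?mul1r.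
rewrite negb_or !negbK => /andP[/eqP y1 /eqP y2].
by apply: (@cyclic_cycle_sub _ ((1 : 'Z_p)%R, ((0 : 'Z_p)%R, c)));
  apply: (mem_line_cycle (k := 0%R)); rewrite ?x1 ?x2 ?y1 ?y2 ?mul0r.
Qed.

Lemma ZpZpZn_invariants : epg_invariants T p n.
Proof.
have [c def_Zn] := cyclicP (Zp_cyclic n).
split; first exact: card_ZpZpZn.
  by rewrite epg_dom_ZpZpZn !cardsX !cards1 card_Zp // !mul1n.
move=> x xT; rewrite epg_dom_ZpZpZn mem_axis_ZpZpZn -mem_ZpZpZn xT andbT negb_and.
move=> nz_x; rewrite (epg_nbhd_ZpZpZn def_Zn) //.
split; first by move=> y z; apply: cyclic_cycle_sub.
by rewrite -orderE order_line_gen // orderE -def_Zn card_Zp.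
Qed.

End ZpZpZnGraph.

Theorem theorem7 (gT : finGroupType) (G : {group gT}) (p n : nat) :
  prime p -> 0 < n -> coprime n p ->
  (epg_iso G (ZpZpZn p n) <-> G \isog ZpZpZn p n).
Proof.
move=> p_pr n_gt0 n_coprime_p; split; last by rewrite /ZpZpZn; apply: isog_epg_iso.
case=> f [f_inj f_im f_adj].
have [cardG card_dom nondom_nbhd] :=
  epg_iso_invariants f_inj f_im f_adj (ZpZpZn_invariants p_pr n_gt0 n_coprime_p).
exact: isog_ZpZpZn p_pr n_gt0 n_coprime_p cardG card_dom nondom_nbhd.
Qed.
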